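(* Under the interleaved updating scheme with updates $\pi^i_{k,j+1}\in\arg\max_{\hat\pi^i}F_{k,i,j}(\hat\pi^i)$ (maximum assumed attained), the sequence $\{J(\pi_k)\}_{k\ge0}$ converges to some limit $\bar J\in\mathbb R$; the set of limit points of the sequence of joint policies $\{\pi_k\}_{k\ge0}$ is nonempty; and for every subsequence with $\pi_{k_j}\to\bar\pi$ one has $J(\bar\pi)=\bar J$.
   Context: Cooperative Markov game $\langle \mathcal N,\mathcal S,\mathcal A,r,P,d\rangle$ with agents $\mathcal N=[n]=\{1,\dots,n\}$, finite state space $\mathcal S$, finite per-agent action spaces $\mathcal A^i$, joint action space $\mathcal A=\prod_i\mathcal A^i$, joint reward $r:\mathcal S\times\mathcal A\to\mathbb R$ bounded by $|r|\le R_{\max}$, transition kernel $P(\cdot\mid s,a)$, initial distribution $d$, discount $\gamma\in[0,1)$. A policy of agent $i$ is a map $\pi^i(\cdot\mid s)\in\Delta(\mathcal A^i)$ (viewed as a point of the finite-dimensional product of simplices, with the Euclidean topology); a joint policy $\pi=(\pi^i)_i$ acts by $\pi(a\mid s)=\prod_i\pi^i(a^i\mid s)$; write $a=(a^{-i},a^i)$, $\pi^{-i}=(\pi^r)_{r\ne i}$. Return: $J(\pi)=\mathbb E_\pi[\sum_{t\ge0}\gamma^t r(s_t,a_t)]$ with $s_0\sim d$, $a_t\sim\pi(\cdot\mid s_t)$, $s_{t+1}\sim P(\cdot\mid s_t,a_t)$. Value $V_\pi(s)$ and action value $Q_\pi(s,a)$ are the expected discounted returns conditioned on $s_0=s$ (resp.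 $s_0=s,a_0=a$); joint advantage $A_\pi(s,a)=Q_\pi(s,a)-V_\pi(s)$. Single-agent advantage: $Q^i_\pi(s,a^i)=\mathbb E_{a^{-i}\sim\pi^{-i}(\cdot\mid s)}[Q_\pi(s,(a^{-i},a^i))]$, $A^i_\pi(s,a^i)=Q^i_\pi(s,a^i)-V_\pi(s)$. Discounted state visitation: $\rho_\pi(s)=\sum_{t\ge0}\gamma^t\Pr_\pi(s_t=s)$. Interleaved scheme: rounds $k=0,1,2,\dots$; $\pi_k=(\pi^i_k)_i$ is the joint policy at the start of round $k$ ($\pi_0$ arbitrary). Within round $k$ agents are processed in order $i=1,\dots,n$; agent $i$ performs $K_i\ge1$ micro-steps $j=0,\dots,K_i-1$ producing iterates $\pi^i_{k,0}=\pi^i_k,\pi^i_{k,1},\dots,\pi^i_{k,K_i}$, and then $\pi^i_{k+1}:=\pi^i_{k,K_i}$. Complement policy: $\tau^{-i}_k:=(\{\pi^r_{k+1}\}_{r<i},\{\pi^r_k\}_{r>i})$; baseline joint policy $\Pi_{k,i,j}:=(\tau^{-i}_k,\pi^i_{k,j})$. Surrogate: for a policy $\hat\pi^i$ of agent $i$, $L^i_{\Pi_{k,i,j}}(\tau^{-i}_k,\hat\pi^i):=\sum_{s}\rho_{\Pi_{k,i,j}}(s)\sum_{a^i}\hat\pi^i(a^i\mid s)\,A^i_{\Pi_{k,i,j}}(s,a^i)$. Constants: $\varepsilon_{k,i,j}=\max_{s,a}|A_{\Pi_{k,i,j}}(s,a)|$, $C_{k,i,j}=\frac{4\gamma\varepsilon_{k,i,j}}{(1-\gamma)^2}$.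 Max conditional KL: $D^{\max}_{\mathrm{KL}}(\mu,\nu)=\sup_s\mathrm{KL}(\mu(\cdot\mid s)\,\|\,\nu(\cdot\mid s))$. Micro-step objective: $F_{k,i,j}(\hat\pi^i):=L^i_{\Pi_{k,i,j}}(\tau^{-i}_k,\hat\pi^i)-C_{k,i,j}\,D^{\max}_{\mathrm{KL}}(\pi^i_{k,j},\hat\pi^i)$. *)

From HB Require Import structures.
From mathcomp Require Import all_boot all_order all_algebra.
From mathcomp Require Import all_classical all_reals all_analysis.
Set Implicit Arguments. Unset Strict Implicit. Unset Printing Implicit Defensive.
Import Order.TTheory GRing.Theory Num.Theory.
Import numFieldNormedType.Exports.
Local Open Scope ring_scope.

Section MarkovGame.
Variables (R : realType) (S : finType) (n : nat) (A : 'I_n -> finType).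

Definition pol (i : 'I_n) := S -> A i -> R.
Definition jpol := forall i : 'I_n, pol i.
Definition jact := {dffun forall i : 'I_n, A i}.

Definition is_dist (T : finType) (mu : T -> R) :=
  (forall t, 0 <= mu t) /\ \sum_t mu t = 1.
Definition is_pol i (p : pol i) := forall s, is_dist (p s).
Definition is_jpol (pi : jpol) := forall i, is_pol (pi i).

Definition jprob (pi : jpol) (s : S) (a : jact) : R := \prod_(i < n) pi i s (a i).

Variables (r : S -> jact -> R) (P : S -> jact -> S -> R) (gamma : R).

Definition Ppi (pi : jpol) (s s' : S) : R := \sum_(a : jact) jprob pi s a * P s a s'.
Definition rpi (pi : jpol) (s : S) : R := \sum_(a : jact) jprob pi s a * r s a.

(* law of s_t under pi when s_0 ~ mu *)
Fixpoint sdist (pi : jpol) (mu : S -> R) (t : nat) : S -> R :=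
  match t with
  | 0 => mu
  | t'.+1 => fun s' => \sum_(s : S) sdist pi mu t' s * Ppi pi s s'
  end.

(* E_pi [ sum_t gamma^t r(s_t,a_t) ] with s_0 ~ mu *)
Definition ret (pi : jpol) (mu : S -> R) : R :=
  limn (fun N => \sum_(t < N) gamma ^+ t * \sum_(s : S) sdist pi mu t s * rpi pi s).

Definition dirac (s : S) : S -> R := fun s' => (s' == s)%:R.

Definition Vf (pi : jpol) (s : S) : R := ret pi (dirac s).
(* s_0 = s, a_0 = a, then s_1 ~ P(.|s,a) and pi afterwards *)
Definition Qf (pi : jpol) (s : S) (a : jact) : R := r s a + gamma * ret pi (P s a).
Definition Af (pi : jpol) (s : S) (a : jact) : R := Qf pi s a - Vf pi s.
Definition Jf (d : S -> R) (pi : jpol) : R := ret pi d.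
Definition rho (d : S -> R) (pi : jpol) (s : S) : R :=
  limn (fun N => \sum_(t < N) gamma ^+ t * sdist pi d t s).

Definition Qi (pi : jpol) (i : 'I_n) (s : S) (ai : A i) : R :=
  \sum_(a : jact | a i == ai) (\prod_(l < n | l != i) pi l s (a l)) * Qf pi s a.
Definition Ai (pi : jpol) (i : 'I_n) (s : S) (ai : A i) : R := Qi pi s ai - Vf pi s.

(* surrogate L^i_Pi(tau^{-i}, hat) ; tau^{-i} is the non-i part of Pi *)
Definition Lsur (d : S -> R) (Pi : jpol) (i : 'I_n) (hat : pol i) : R :=
  \sum_(s : S) rho d Pi s * \sum_(ai : A i) hat s ai * Ai Pi s ai.

Definition epsA (pi : jpol) : R :=
  \big[Num.max/0]_(s : S) \big[Num.max/0]_(a : jact) `|Af pi s a|.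
Definition Cpen (pi : jpol) : R := 4 * gamma * epsA pi / (1 - gamma) ^+ 2.

End MarkovGame.

(* KL divergence, with 0 log 0 = 0 and KL = +oo if mu is not << nu *)
Definition KL (R : realType) (T : finType) (mu nu : T -> R) : \bar R :=
  if [exists t, (0 < mu t) && (nu t == 0)] then +oo%E
  else (\sum_(t | 0 < mu t) mu t * ln (mu t / nu t))%:E.

Definition DmaxKL (R : realType) (S : finType) (T : finType) (p q : S -> T -> R) : \bar R :=
  \big[maxe/-oo%E]_(s : S) KL (p s) (q s).

(* micro-step objective F_{k,i,j}(hat) with baseline Pi = Pi_{k,i,j}, cur = pi^i_{k,j} *)
Definition Fobj (R : realType) (S : finType) (n : nat) (A : 'I_n -> finType)
  (r : S -> jact A -> R) (P : S -> jact A -> S -> R) (gamma : R) (d : S -> R)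
  (Pi : jpol R S A) (i : 'I_n) (cur hat : pol R S A i) : \bar R :=
  ((Lsur r P gamma d Pi hat)%:E - (Cpen r P gamma Pi)%:E * DmaxKL cur hat)%E.

Definition baseline (R : realType) (S : finType) (n : nat) (A : 'I_n -> finType)
  (pk pk1 : jpol R S A) (i : 'I_n) (cur : jpol R S A) : jpol R S A :=
  fun l => if (l < i)%N then pk1 l else if (i < l)%N then pk l else cur l.

From Pilot Require Import Defs.
From HB Require Import structures.
From mathcomp Require Import all_boot all_order all_algebra.
From mathcomp Require Import all_classical all_reals all_analysis.
From mathcomp Require Import ring lra.
Set Implicit Arguments. Unset Strict Implicit. Unset Printing Implicit Defensive.
Import Order.TTheory GRing.Theory Num.Theory.
Import numFieldNormedType.Exports.
Local Open Scope classical_set_scope.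
Local Open Scope ring_scope.

(* By the performance-difference lemma, changing only agent i's policy from
   pi^i to pi'^i changes J by the surrogate L^i(pi'^i) up to an error
   gamma eps delta^2 / (1 - gamma)^2, where delta bounds the l1 distance
   between pi^i(.|s) and pi'^i(.|s); since delta^2 / 4 <= D_KL^max, this error
   is at most C D_KL^max, so J(new) - J(old) >= F(pi'^i) >= F(pi^i) = 0.
   Hence J increases along micro-steps, thus along rounds, and being bounded
   by Rmax / (1 - gamma) it converges.  Policies live in a compact product of
   simplices (Bolzano-Weierstrass gives limit points) and J is continuous in
   the policy, so J takes the limit value at every limit point. *)

Lemma sum_dffun_prod (R : comNzRingType) (I : finType) (T_ : I -> finType)
    (f : forall i, T_ i -> R) :
  \sum_(a : {dffun forall i, T_ i}) \prod_i f i (a i) = \prod_i \sum_(x : T_ i) f i x.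
Proof.
rewrite (reindex (@dffun_of_fprod I T_)); last exact/onW_bij/dffun_of_fprod_bij.
transitivity (\sum_(t : fprod T_) \prod_(i in I) [ffun x => f i x] (t i)).
  by apply: eq_bigr => t _; apply: eq_bigr => i _; rewrite !ffunE.
rewrite big_fprod.
rewrite -[LHS]/(\sum_(g in family (tagged_with T_)) \prod_i untag 0 [ffun x => f i x] (g i)).
rewrite -(bigA_distr_big_dep _ (fun i j => untag 0 [ffun x => f i x] j)).
apply: eq_bigr => i _.
transitivity (\sum_(x : T_ i) [ffun x => f i x] x); last by apply: eq_bigr => x _; rewrite ffunE.
by rewrite (big_tag (fun i => fun_of_fin [ffun x => f i x]) i); apply: eq_bigl.
Qed.

Section RealFacts.
Variable R : realType.

Lemma cvg_sumr (I : Type) (r : seq I) (P : pred I) (f : I -> nat -> R) (l : I -> R) :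
  (forall i, f i @ \oo --> l i) ->
  (fun N => \sum_(i <- r | P i) f i N) @ \oo --> \sum_(i <- r | P i) l i.
Proof. by move=> fl; apply: cvg_big => [|i _]; [exact: add_continuous|exact: fl]. Qed.

Lemma cvg_prodr (I : Type) (r : seq I) (P : pred I) (f : I -> nat -> R) (l : I -> R) :
  (forall i, f i @ \oo --> l i) ->
  (fun N => \prod_(i <- r | P i) f i N) @ \oo --> \prod_(i <- r | P i) l i.
Proof. by move=> fl; apply: cvg_big => [|i _]; [exact: mul_continuous|exact: fl]. Qed.

Lemma norm_cvg_le (u : nat -> R) (l B : R) :
  u @ \oo --> l -> (forall N, `|u N| <= B) -> `|l| <= B.
Proof. by move=> ul uB; apply: (ler_cvg_to (cvg_norm ul) (cvg_cst B)); exact: nearW. Qed.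

Lemma cvg_increasing_subseq (T : topologicalType) (phi : nat -> nat) (u : nat -> T) (l : T) :
  increasing_seq phi -> u @ \oo --> l -> u \o phi @ \oo --> l.
Proof.
move=> /increasing_seqP phiS; apply: cvg_comp => A [N _ NA]; exists N => // m /= Nm.
have phi_ge k : (k <= phi k)%N by elim: k => // k IH; exact: leq_ltn_trans IH (phiS k).
exact/NA/(leq_trans Nm (phi_ge m)).
Qed.

Lemma bolzano_weierstrass_seq (I : eqType) (x : nat -> I -> R) (B : R) (s : seq I) :
  (forall k i, `|x k i| <= B) ->
  exists2 phi : nat -> nat, increasing_seq phi &
    exists L : I -> R, forall i, i \in s -> (fun m => x (phi m) i) @ \oo --> L i.
Proof.
move=> xB; elim: s => [|i0 s [phi phi_incr [L xL]]]; first by exists id => //; exists (fun=> 0).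
have bnd : bounded_fun (fun m => x (phi m) i0).
  rewrite /bounded_near; near=> M => m _ /=.
  by apply: le_trans (xB _ _) _; near: M; exact: nbhs_pinfty_ge (num_real B).
have [psi psi_incr /cvg_ex [li xli]] := bolzano_weierstrass bnd.
exists (phi \o psi); first by move=> a b /=; rewrite phi_incr; exact: psi_incr.
exists (fun j => if j == i0 then li else L j) => j; rewrite in_cons.
case: eqP => [-> _|_ /= js]; first exact: xli.
exact: (cvg_increasing_subseq psi_incr (xL j js)).
Unshelve. all: by end_near. Qed.

Lemma cauchy_schwarz (I : finType) (u v : I -> R) :
  (\sum_i u i * v i) ^+ 2 <= (\sum_i u i ^+ 2) * (\sum_i v i ^+ 2).
Proof.
set A := \sum_i u i ^+ 2; set B := \sum_i u i * v i; set C := \sum_i v i ^+ 2.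
have quad_ge0 t : 0 <= t ^+ 2 * A - 2 * t * B + C.
  have -> : t ^+ 2 * A - 2 * t * B + C = \sum_i (u i * t - v i) ^+ 2.
    rewrite /A /B /C !mulr_sumr -sumrB -big_split /=.
    by apply: eq_bigr => i _; ring.
  by apply: sumr_ge0 => i _; exact: sqr_ge0.
have A0 : 0 <= A by apply: sumr_ge0 => i _; exact: sqr_ge0.
have [Az|Anz] := eqVneq A 0.
  have u0 i : u i = 0.
    apply/eqP; rewrite -sqrf_eq0; apply/eqP; move/eqP: Az.
    rewrite psumr_eq0 => [/allP /(_ i) /=|j _]; last exact: sqr_ge0.
    by rewrite mem_index_enum => /(_ isT) /eqP.
  by rewrite /B big1 ?Az ?expr0n ?mul0r // => i _; rewrite u0 mul0r.
have Ap : 0 < A by rewrite lt_neqAle eq_sym Anz A0.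
have := quad_ge0 (B / A); set t := B / A => h.
have tA : t * A = B by rewrite /t divfK.
nra.
Qed.

Lemma ln_ratio_sqr_ge (a b : R) : 0 < a -> 0 < b ->
  2 * (a ^+ 2 - a * b) <= a ^+ 2 * ln (a ^+ 2 / b ^+ 2).
Proof.
move=> a0 b0; have y0 : 0 < b / a by rewrite divr_gt0.
have lnyB : ln (b / a) <= b / a - 1.
  by have := @le_ln1Dx R (b / a - 1); rewrite [1 + _]addrC subrK; apply; lra.
rewrite -[a ^+ 2 / _]invf_div -expr_div_n lnV ?posrE ?exprn_gt0 // lnXn //.
have ayb : a * (b / a) = b by rewrite mulrC divfK // gt_eqF.
set y := b / a in y0 lnyB ayb *; rewrite mulr2n -ayb.
have : 0 <= a ^+ 2 * (y - 1 - ln y) by rewrite mulr_ge0 ?sqr_ge0 ?subr_ge0.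
lra.
Qed.

(* KL(p || q) >= 2 (1 - sum_t sqrt(p t q t)) = sum_t (sqrt p t - sqrt q t)^2,
   and Cauchy-Schwarz bounds (sum_t |p t - q t|)^2 by that sum times
   sum_t (sqrt p t + sqrt q t)^2 <= 4. *)
Lemma l1_sqr_div4_le_KL (T : finType) (p q : T -> R) :
  (forall t, 0 <= p t) -> \sum_t p t = 1 -> (forall t, 0 <= q t) -> \sum_t q t = 1 ->
  (((\sum_t `|p t - q t|) ^+ 2 / 4)%:E <= KL p q)%E.
Proof.
move=> p0 p1 q0 q1; rewrite /KL; case: ifPn => [_|abs_cont]; first exact: leey.
rewrite lee_fin.
have qpos t : 0 < p t -> 0 < q t.
  move=> pt; move/existsPn: abs_cont => /(_ t); rewrite pt /= => qt.
  by rewrite lt_neqAle eq_sym qt q0.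
pose a t := Num.sqrt (p t); pose b t := Num.sqrt (q t).
have pa t : p t = a t ^+ 2 by rewrite sqr_sqrtr.
have qb t : q t = b t ^+ 2 by rewrite sqr_sqrtr.
have a0 t : 0 <= a t by exact: sqrtr_ge0.
have b0 t : 0 <= b t by exact: sqrtr_ge0.
set X := \sum_t a t * b t.
have KL_ge : 2 * (1 - X) <= \sum_(t | 0 < p t) p t * ln (p t / q t).
  have -> : 2 * (1 - X) = \sum_(t | 0 < p t) 2 * (p t - a t * b t).
    rewrite -p1 /X -sumrB mulr_sumr [RHS]big_mkcond /=; apply: eq_bigr => t _.
    case: ifPn => // pt; have pt0 : p t = 0 by apply/eqP; rewrite eq_le p0 andbT leNgt.
    by rewrite /a pt0 sqrtr0 mul0r subrr mulr0.
  apply: ler_sum => t pt; have := ln_ratio_sqr_ge (a := a t) (b := b t).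
  by rewrite -pa -qb; apply; rewrite sqrtr_gt0 // qpos.
have sqr_diff : \sum_t `|a t - b t| ^+ 2 = 2 * (1 - X).
  have -> : \sum_t `|a t - b t| ^+ 2 = \sum_t p t + \sum_t q t - 2 * X.
    rewrite /X mulr_sumr -big_split -sumrB /=; apply: eq_bigr => t _.
    by rewrite real_normK ?num_real // pa qb; ring.
  by rewrite p1 q1; ring.
have sqr_sum : \sum_t (a t + b t) ^+ 2 = 2 * (1 + X).
  have -> : \sum_t (a t + b t) ^+ 2 = \sum_t p t + \sum_t q t + 2 * X.
    by rewrite /X mulr_sumr -!big_split /=; apply: eq_bigr => t _; rewrite pa qb; ring.
  by rewrite p1 q1; ring.
have l1_eq : \sum_t `|p t - q t| = \sum_t `|a t - b t| * (a t + b t).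
  apply: eq_bigr => t _; rewrite pa qb -[a t + b t]ger0_norm ?addr_ge0 // -normrM.
  by congr `|_|; ring.
have := cauchy_schwarz (fun t => `|a t - b t|) (fun t => a t + b t).
rewrite -l1_eq sqr_diff sqr_sum /=; set D := \sum_t `|p t - q t| => CS.
have X1 : X <= 1.
  have : 0 <= \sum_t `|a t - b t| ^+ 2 by apply: sumr_ge0 => t _; exact: sqr_ge0.
  rewrite sqr_diff; lra.
apply: le_trans KL_ge; rewrite ler_pdivrMr //.
have : 2 * (1 - X) * (2 * (1 + X)) <= 2 * (1 - X) * 4 by apply: ler_wpM2l; lra.
lra.
Qed.

Lemma KL_self_le0 (T : finType) (p : T -> R) : (KL p p <= 0)%E.
Proof.
rewrite /KL; case: ifPn => [/existsP [t /andP [pt /eqP p0]]|_].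
  by rewrite p0 ltxx in pt.
by rewrite lee_fin big1 // => t pt; rewrite divff ?ln1 ?mulr0 // gt_eqF.
Qed.

Variable gamma : R.
Hypotheses (hg0 : 0 <= gamma) (hg1 : gamma < 1).

Lemma geometric_sum_le N : \sum_(t < N) gamma ^+ t <= (1 - gamma)^-1.
Proof.
have g1 : 0 < 1 - gamma by rewrite subr_gt0.
rewrite -[X in _ <= X]div1r ler_pdivlMr // mulr_suml.
have -> : \sum_(t < N) gamma ^+ t * (1 - gamma) = 1 - gamma ^+ N.
  elim: N => [|N IH]; first by rewrite big_ord0 expr0 subrr.
  by rewrite big_ord_recr /= IH exprS; ring.
by rewrite lerBlDr lerDl exprn_ge0.
Qed.

Lemma arith_geometric_sum_le N : \sum_(t < N) t%:R * gamma ^+ t <= gamma / (1 - gamma) ^+ 2.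
Proof.
have g1 : 0 < 1 - gamma by rewrite subr_gt0.
rewrite ler_pdivlMr ?exprn_gt0 // mulr_suml.
have -> : \sum_(t < N) t%:R * gamma ^+ t * (1 - gamma) ^+ 2 =
    gamma - gamma ^+ N * (N%:R * (1 - gamma) + gamma).
  elim: N => [|N IH]; first by rewrite big_ord0 expr0 mul1r; ring.
  by rewrite big_ord_recr /= IH [gamma ^+ N.+1]exprS -natr1; ring.
by rewrite lerBlDr lerDl mulr_ge0 ?exprn_ge0 // addr_ge0 // mulr_ge0 // ltW.
Qed.

Lemma geometric_dominated_sum_le (u : nat -> R) (c : R) N :
  (forall t, `|u t| <= c * gamma ^+ t) -> `|\sum_(t < N) u t| <= c / (1 - gamma).
Proof.
move=> uc; have c0 : 0 <= c by have := uc 0%N; rewrite expr0 mulr1; apply: le_trans.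
apply: le_trans (ler_norm_sum _ _ _) _.
apply: (@le_trans _ _ (\sum_(t < N) c * gamma ^+ t)); first by apply: ler_sum => t _.
by rewrite -mulr_sumr ler_wpM2l // geometric_sum_le.
Qed.

Lemma geometric_dominated_cvgn (u : nat -> R) (c : R) :
  (forall t, `|u t| <= c * gamma ^+ t) -> cvgn (fun N => \sum_(t < N) u t).
Proof.
move=> uc; have -> : (fun N => \sum_(t < N) u t) = series u.
  by apply/funext => N; rewrite /series /= big_mkord.
apply: normed_cvg; apply: nondecreasing_is_cvgn.
  by apply/nondecreasing_seqP => N; rewrite /= seriesSr lerDl.
exists (c / (1 - gamma)) => _ [N _ <-]; rewrite /= seriesEord /=.
apply: le_trans (ler_norm _) _.
by apply: (@geometric_dominated_sum_le (fun t => `|u t|) c N) => t; rewrite normr_id.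
Qed.

Lemma cvg_geometric_mul0 (c : R) : (fun N => gamma ^+ N * c) @ \oo --> 0.
Proof.
rewrite -(mul0r c); apply: cvgM; last exact: cvg_cst.
by apply: cvg_expr; rewrite ger0_norm.
Qed.

End RealFacts.

Section Policies.
Variables (R : realType) (S : finType) (n : nat) (A : 'I_n -> finType).
Local Notation jpol := (jpol R S A).
Implicit Types (pi p q c : jpol) (s : S) (a : jact A).

Lemma jpol_ext p q : (forall l s x, p l s x = q l s x) -> p = q.
Proof.
move=> pq; apply: functional_extensionality_dep => l.
by apply/funext => s; apply/funext => x; exact: pq.
Qed.

Lemma jprob_ge0 pi s a : is_jpol pi -> 0 <= jprob pi s a.
Proof. by move=> hpi; apply: prodr_ge0 => i _; exact: (hpi i s).1. Qed.

Lemma jprob_sum1 pi s : is_jpol pi -> \sum_a jprob pi s a = 1.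
Proof.
move=> hpi; rewrite /jprob (sum_dffun_prod (fun i x => pi i s x)).
by apply: big1 => i _; exact: (hpi i s).2.
Qed.

Lemma jprob_split pi s a (i : 'I_n) :
  jprob pi s a = pi i s (a i) * \prod_(l < n | l != i) pi l s (a l).
Proof. by rewrite /jprob (bigD1 i). Qed.

Lemma sum_jprob_others pi s (i : 'I_n) (ai : A i) : is_jpol pi ->
  \sum_(a : jact A | a i == ai) \prod_(l < n | l != i) pi l s (a l) = 1.
Proof.
move=> hpi.
pose f (l : 'I_n) (x : A l) : R :=
  if l == i then (Tagged A x == Tagged A ai)%:R else pi l s x.
have f1 : \prod_l \sum_x f l x = 1.
  apply: big1 => l _; case: (eqVneq l i) => [->|li]; last first.
    by rewrite /f; under eq_bigr do rewrite (negbTE li); exact: (hpi l s).2.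
  rewrite /f eqxx; under eq_bigr do rewrite eq_Tagged /=.
  by rewrite (bigD1 ai) //= eqxx big1 ?addr0 // => x /negbTE ->.
rewrite -[RHS]f1 -sum_dffun_prod big_mkcond /=; apply: eq_bigr => a _.
rewrite [in RHS](bigD1 i) // /f eqxx eq_Tagged /=.
have -> : \prod_(l < n | l != i)
    (if l == i then (Tagged A (a l) == Tagged A ai)%:R else pi l s (a l)) =
    \prod_(l < n | l != i) pi l s (a l).
  by apply: eq_bigr => l li; rewrite (negbTE li).
by case: eqP => _; rewrite ?mul1r ?mul0r.
Qed.

Lemma sum_partition_at pi s (i : 'I_n) (w : A i -> R) (g : jact A -> R) :
  \sum_(a : jact A) w (a i) * \prod_(l < n | l != i) pi l s (a l) * g a =
  \sum_(ai : A i) w ai * \sum_(a : jact A | a i == ai) \prod_(l < n | l != i) pi l s (a l) * g a.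
Proof.
rewrite (partition_big (fun a : jact A => a i) predT) //=; apply: eq_bigr => ai _.
by rewrite mulr_sumr; apply: eq_bigr => a /eqP <-; ring.
Qed.

Lemma baseline_at p q c (i : 'I_n) : @baseline R S n A p q i c i = c i.
Proof. by rewrite /baseline ltnn. Qed.

Lemma baseline_off p q c c' (i l : 'I_n) :
  l != i -> @baseline R S n A p q i c l = @baseline R S n A p q i c' l.
Proof.
move=> li; rewrite /baseline; case: ltngtP => // /val_inj eli.
by rewrite eli eqxx in li.
Qed.

Definition splice p q (m : nat) : jpol := fun l => if (l < m)%N then q l else p l.

Lemma splice_baseline_first p q c (i : 'I_n) :
  c i = p i -> splice p q i = baseline p q i c.
Proof.
move=> cp; apply: jpol_ext => l s x; rewrite /splice /baseline.
by case: ltngtP => // /val_inj eli; subst l; rewrite cp.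
Qed.

Lemma splice_baseline_last p q c (i : 'I_n) :
  c i = q i -> splice p q i.+1 = baseline p q i c.
Proof.
move=> cq; apply: jpol_ext => l s x; rewrite /splice /baseline ltnS.
by case: ltngtP => // /val_inj eli; subst l; rewrite cq.
Qed.

Lemma is_jpol_lim (pis : nat -> jpol) (pibar : jpol) : (forall m, is_jpol (pis m)) ->
  (forall i s x, (fun m => pis m i s x) @ \oo --> pibar i s x) -> is_jpol pibar.
Proof.
move=> pis_pol pis_lim l s; split=> [x|].
  apply: (ler_cvg_to (cvg_cst (0 : R)) (pis_lim l s x)).
  by apply: nearW => m; exact: (pis_pol m l s).1.
have one_lim : (fun m : nat => 1 : R) @ \oo --> \sum_x pibar l s x.
  by under eq_cvg => m do rewrite -(pis_pol m l s).2; exact: cvg_sumr.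
exact: (cvg_unique _ one_lim (cvg_cst (1 : R))).
Qed.

Lemma jpol_cluster (pis : nat -> jpol) : (forall m, is_jpol (pis m)) ->
  exists2 phi : nat -> nat, increasing_seq phi &
    exists pibar : jpol, forall i s x, (fun m => pis (phi m) i s x) @ \oo --> pibar i s x.
Proof.
move=> pis_pol.
pose x k (p : S * {l : 'I_n & A l}) := pis k (tag p.2) p.1 (tagged p.2).
have x1 k y : `|x k y| <= 1.
  case: y => s [l a]; rewrite /x /=; have [p0 p1] := pis_pol k l s.
  by rewrite ger0_norm // -p1 (bigD1 a) //= lerDl sumr_ge0.
have [phi phi_incr [L xL]] := bolzano_weierstrass_seq (index_enum _) x1.
exists phi => //; exists (fun l s y => L (s, Tagged A y)) => i s y.
exact: (xL (s, Tagged A y) (mem_index_enum _)).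
Qed.

End Policies.

Section MDP.
Variables (R : realType) (S : finType) (n : nat) (A : 'I_n -> finType)
  (r : S -> jact A -> R) (Rmax : R) (P : S -> jact A -> S -> R) (gamma : R).
Hypotheses (hr : forall s a, `|r s a| <= Rmax) (hP : forall s a, is_dist (P s a))
  (hg0 : 0 <= gamma) (hg1 : gamma < 1).

Local Notation jpol := (jpol R S A).
Local Notation Vf := (Vf r P gamma).
Local Notation Jf := (Jf r P gamma).
Local Notation dirac := (@Defs.dirac R S).
Implicit Types (pi : jpol) (s : S) (a : jact A) (mu f x : S -> R).

Definition dot x f := \sum_s x s * f s.
Definition l1 x := \sum_s `|x s|.
Definition disc_sum pi mu f N := \sum_(t < N) gamma ^+ t * dot (sdist P pi mu t) f.
Definition disc_val pi mu f := limn (disc_sum pi mu f).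

Lemma normr_le_l1 x s : `|x s| <= l1 x.
Proof. by rewrite /l1 (bigD1 s) //= lerDl sumr_ge0. Qed.

Lemma l1_dist x : (forall s, 0 <= x s) -> \sum_s x s = 1 -> l1 x = 1.
Proof. by move=> x0 x1; rewrite /l1 -x1; apply: eq_bigr => s _; rewrite ger0_norm. Qed.

Lemma normr_dot_le x f c : (forall s, `|f s| <= c) -> `|dot x f| <= l1 x * c.
Proof.
move=> fc; apply: le_trans (ler_norm_sum _ _ _) _; rewrite /l1 mulr_suml.
by apply: ler_sum => s _; rewrite normrM ler_wpM2l.
Qed.

Lemma Ppi_ge0 pi s s' : is_jpol pi -> 0 <= Ppi P pi s s'.
Proof.
move=> hpi; apply: sumr_ge0 => a _.
by rewrite mulr_ge0 ?jprob_ge0 //; exact: (hP s a).1.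
Qed.

Lemma Ppi_sum1 pi s : is_jpol pi -> \sum_s' Ppi P pi s s' = 1.
Proof.
move=> hpi; rewrite /Ppi exchange_big /= -(jprob_sum1 s hpi).
by apply: eq_bigr => a _; rewrite -mulr_sumr (hP s a).2 mulr1.
Qed.

Lemma normr_rpi_le pi s : is_jpol pi -> `|rpi r pi s| <= `|Rmax|.
Proof.
move=> hpi; apply: le_trans (ler_norm_sum _ _ _) _.
apply: (@le_trans _ _ (\sum_a jprob pi s a * `|Rmax|)).
  apply: ler_sum => a _; rewrite normrM ger0_norm ?jprob_ge0 //.
  by rewrite ler_wpM2l ?jprob_ge0 // (le_trans (hr s a) (ler_norm _)).
by rewrite -mulr_suml jprob_sum1 // mul1r.
Qed.

Lemma sdistSr pi mu t :
  sdist P pi mu t.+1 = sdist P pi (fun s' => \sum_s mu s * Ppi P pi s s') t.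
Proof.
elim: t => [//|t IH]; apply/funext => s' /=.
by apply: eq_bigr => s _; rewrite -IH.
Qed.

Lemma sdist_dirac_sum pi mu t s :
  sdist P pi mu t s = \sum_u mu u * sdist P pi (dirac u) t s.
Proof.
elim: t s => [|t IH] s /=.
  rewrite (bigD1 s) //= /dirac eqxx mulr1 big1 ?addr0 // => u us.
  by rewrite eq_sym (negbTE us) mulr0.
under eq_bigr do rewrite IH mulr_suml.
rewrite exchange_big /=; apply: eq_bigr => u _; rewrite mulr_sumr.
by apply: eq_bigr => s0 _; rewrite mulrA.
Qed.

Lemma l1_sdist_le pi mu t : is_jpol pi -> l1 (sdist P pi mu t) <= l1 mu.
Proof.
move=> hpi; elim: t => [//|t IH]; apply: le_trans IH; rewrite /l1 /=.
apply: (@le_trans _ _ (\sum_s' \sum_s `|sdist P pi mu t s| * Ppi P pi s s')).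
  apply: ler_sum => s' _; apply: le_trans (ler_norm_sum _ _ _) _.
  by apply: ler_sum => s _; rewrite normrM (ger0_norm (Ppi_ge0 _ _ hpi)).
rewrite exchange_big /=; apply: ler_sum => s _.
by rewrite -mulr_sumr Ppi_sum1 // mulr1.
Qed.

Lemma sdist_ge0 pi mu t s : is_jpol pi -> (forall s, 0 <= mu s) -> 0 <= sdist P pi mu t s.
Proof.
move=> hpi mu0; elim: t s => [//|t IH] s /=.
by apply: sumr_ge0 => u _; rewrite mulr_ge0 ?Ppi_ge0.
Qed.

Lemma sdist_sum pi mu t : is_jpol pi -> \sum_s sdist P pi mu t s = \sum_s mu s.
Proof.
move=> hpi; elim: t => [//|t IH] /=; rewrite exchange_big /= -IH.
by apply: eq_bigr => s _; rewrite -mulr_sumr Ppi_sum1 // mulr1.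
Qed.

Lemma l1_sdist_dist pi mu t : is_jpol pi -> is_dist mu -> l1 (sdist P pi mu t) = 1.
Proof.
by move=> hpi [mu0 mu1]; rewrite l1_dist // => [s|]; [exact: sdist_ge0|rewrite sdist_sum].
Qed.

Lemma cvg_disc_sum pi mu f : is_jpol pi -> disc_sum pi mu f @ \oo --> disc_val pi mu f.
Proof.
move=> hpi; apply: (geometric_dominated_cvgn hg0 hg1
  (u := fun t => gamma ^+ t * dot (sdist P pi mu t) f) (c := l1 mu * l1 f)) => t.
rewrite normrM ger0_norm ?exprn_ge0 // [X in _ <= X]mulrC ler_wpM2l ?exprn_ge0 //.
apply: le_trans (normr_dot_le _ (normr_le_l1 f)) _.
by rewrite ler_wpM2r ?sumr_ge0 ?l1_sdist_le.
Qed.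

Lemma disc_val_dirac_sum pi mu f : is_jpol pi ->
  disc_val pi mu f = \sum_u mu u * disc_val pi (dirac u) f.
Proof.
move=> hpi; apply: cvg_lim => //.
have -> : disc_sum pi mu f = fun N => \sum_u mu u * disc_sum pi (dirac u) f N.
  apply/funext => N; rewrite /disc_sum /dot.
  under [in RHS]eq_bigr do rewrite mulr_sumr.
  rewrite exchange_big /=; apply: eq_bigr => t _; rewrite mulr_sumr.
  transitivity (\sum_i \sum_u mu u * (gamma ^+ t * (sdist P pi (dirac u) t i * f i))).
    apply: eq_bigr => i _; rewrite (sdist_dirac_sum pi mu t i) mulr_suml mulr_sumr.
    by apply: eq_bigr => u _; ring.
  rewrite exchange_big /=; apply: eq_bigr => u _; rewrite !mulr_sumr.
  by apply: eq_bigr => s _; ring.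
by apply: cvg_sumr => u; apply: cvgM; [exact: cvg_cst|exact: cvg_disc_sum].
Qed.

Lemma sum_dirac u (g : S -> R) : \sum_s dirac u s * g s = g u.
Proof.
rewrite (bigD1 u) //= /dirac eqxx mul1r big1 ?addr0 // => s su.
by rewrite (negbTE su) mul0r.
Qed.

Lemma disc_sum_diracS pi u f N :
  disc_sum pi (dirac u) f N.+1 = f u + gamma * disc_sum pi (Ppi P pi u) f N.
Proof.
rewrite /disc_sum big_ord_recl expr0 mul1r /dot sum_dirac mulr_sumr; congr (_ + _).
apply: eq_bigr => t _; rewrite lift0 sdistSr.
have -> : (fun s' => \sum_s dirac u s * Ppi P pi s s') = Ppi P pi u.
  by apply/funext => s'; rewrite sum_dirac.
by rewrite exprS mulrA.
Qed.

Lemma ret_dirac_sum pi mu : is_jpol pi -> ret r P gamma pi mu = \sum_u mu u * Vf pi u.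
Proof. exact: disc_val_dirac_sum. Qed.

Lemma bellman pi u : is_jpol pi ->
  Vf pi u = rpi r pi u + gamma * \sum_s' Ppi P pi u s' * Vf pi s'.
Proof.
move=> hpi; rewrite -ret_dirac_sum //.
have lim_V : (fun N => disc_sum pi (dirac u) (rpi r pi) N.+1) @ \oo --> Vf pi u.
  by rewrite (cvg_shiftS (disc_sum pi (dirac u) (rpi r pi))); exact: cvg_disc_sum.
have lim_bellman : (fun N => disc_sum pi (dirac u) (rpi r pi) N.+1) @ \oo -->
    rpi r pi u + gamma * ret r P gamma pi (Ppi P pi u).
  under eq_cvg do rewrite disc_sum_diracS.
  by apply: cvgD; [exact: cvg_cst|apply: cvgM; [exact: cvg_cst|exact: cvg_disc_sum]].
exact: (cvg_unique _ lim_V lim_bellman).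
Qed.

Lemma sum_jprob_Qf pi pi' s : is_jpol pi ->
  \sum_a jprob pi' s a * Qf r P gamma pi s a =
  rpi r pi' s + gamma * \sum_u Ppi P pi' s u * Vf pi u.
Proof.
move=> hpi; under eq_bigr do rewrite /Qf ret_dirac_sum // mulrDr.
rewrite big_split /=; congr (_ + _).
rewrite /Ppi mulr_sumr; under [RHS]eq_bigr do rewrite mulr_suml mulr_sumr.
rewrite [RHS]exchange_big /=; apply: eq_bigr => a _.
by rewrite !mulr_sumr; apply: eq_bigr => u _; ring.
Qed.

Lemma sum_jprob_Af pi s : is_jpol pi -> \sum_a jprob pi s a * Af r P gamma pi s a = 0.
Proof.
move=> hpi; rewrite /Af; under eq_bigr do rewrite mulrBr.
by rewrite sumrB sum_jprob_Qf // -bellman // -mulr_suml jprob_sum1 // mul1r subrr.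
Qed.

(* One-step advantage of following pi' once and pi afterwards. *)
Definition adv pi pi' s :=
  rpi r pi' s + gamma * \sum_u Ppi P pi' s u * Vf pi u - Vf pi s.

Lemma disc_sum_adv pi pi' mu N :
  disc_sum pi' mu (adv pi pi') N =
  disc_sum pi' mu (rpi r pi') N + gamma ^+ N * dot (sdist P pi' mu N) (Vf pi) - dot mu (Vf pi).
Proof.
elim: N => [|N IH]; first by rewrite /disc_sum !big_ord0 expr0 mul1r /=; ring.
rewrite /disc_sum !big_ord_recr /= -!/(disc_sum _ _ _ _) IH.
have -> : dot (sdist P pi' mu N) (adv pi pi') =
    dot (sdist P pi' mu N) (rpi r pi') + gamma * dot (sdist P pi' mu N.+1) (Vf pi)
    - dot (sdist P pi' mu N) (Vf pi).
  rewrite /dot /adv /=; under eq_bigr do rewrite mulrBr mulrDr.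
  rewrite sumrB big_split /=; congr (_ + _ - _).
  rewrite mulr_sumr; under [RHS]eq_bigr do rewrite mulr_suml mulr_sumr.
  rewrite [RHS]exchange_big /=; apply: eq_bigr => s _.
  by rewrite !mulr_sumr; apply: eq_bigr => u _; ring.
by rewrite exprS; ring.
Qed.

Lemma performance_difference pi pi' mu : is_jpol pi -> is_jpol pi' ->
  disc_sum pi' mu (adv pi pi') @ \oo --> ret r P gamma pi' mu - ret r P gamma pi mu.
Proof.
move=> hpi hpi'; under eq_cvg do rewrite disc_sum_adv.
rewrite (ret_dirac_sum mu hpi) -/(dot mu (Vf pi)) -[ret _ _ _ pi' mu]addr0.
apply: cvgB; last exact: cvg_cst.
apply: cvgD; first exact: cvg_disc_sum.
set c := l1 mu * l1 (Vf pi).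
apply: (@squeeze_cvgr _ _ _ _ (fun N => - (gamma ^+ N * c)) (fun N => gamma ^+ N * c)).
- near=> N; rewrite -ler_norml normrM ger0_norm ?exprn_ge0 // ler_wpM2l ?exprn_ge0 //.
  apply: le_trans (normr_dot_le _ (normr_le_l1 _)) _.
  by rewrite ler_wpM2r ?sumr_ge0 ?l1_sdist_le.
- by rewrite -oppr0; apply: cvgN; exact: cvg_geometric_mul0.
- exact: cvg_geometric_mul0.
Unshelve. all: by end_near. Qed.

Lemma performance_difference_le pi pi' mu (g : R) : is_jpol pi -> is_jpol pi' -> is_dist mu ->
  (forall s, `|adv pi pi' s| <= g) ->
  `|ret r P gamma pi' mu - ret r P gamma pi mu| <= g / (1 - gamma).
Proof.
move=> hpi hpi' hmu advg.
apply: (norm_cvg_le (performance_difference (mu := mu) hpi hpi')) => N.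
apply: (geometric_dominated_sum_le hg0 hg1
  (u := fun t => gamma ^+ t * dot (sdist P pi' mu t) (adv pi pi'))) => t.
rewrite normrM ger0_norm ?exprn_ge0 // mulrC ler_wpM2r ?exprn_ge0 //.
by apply: le_trans (normr_dot_le _ advg) _; rewrite l1_sdist_dist // mul1r.
Qed.

Lemma Jf_le_bound pi d : is_jpol pi -> is_dist d -> Jf d pi <= `|Rmax| / (1 - gamma).
Proof.
move=> hpi hd; apply: le_trans (ler_norm _) _.
apply: (norm_cvg_le (cvg_disc_sum (mu := d) (f := rpi r pi) hpi)) => N.
apply: (geometric_dominated_sum_le hg0 hg1
  (u := fun t => gamma ^+ t * dot (sdist P pi d t) (rpi r pi))) => t.
rewrite normrM ger0_norm ?exprn_ge0 // mulrC ler_wpM2r ?exprn_ge0 //.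
apply: le_trans (normr_dot_le _ (fun s => normr_rpi_le s hpi)) _.
by rewrite l1_sdist_dist // mul1r.
Qed.

Lemma cvg_Jf (pis : nat -> jpol) (pibar : jpol) d :
  is_jpol pibar -> (forall m, is_jpol (pis m)) -> is_dist d ->
  (forall i s (x : A i), (fun m => pis m i s x) @ \oo --> pibar i s x) ->
  (fun m => Jf d (pis m)) @ \oo --> Jf d pibar.
Proof.
move=> hbar hpis hd pis_lim.
have jprob_lim s a : (fun m => jprob (pis m) s a) @ \oo --> jprob pibar s a.
  by apply: cvg_prodr => i; exact: pis_lim.
have adv_lim s : (fun m => adv pibar (pis m) s) @ \oo --> 0.
  rewrite -(subrr (Vf pibar s)) {1}(bellman s hbar).
  apply: cvgB; last exact: cvg_cst.
  apply: cvgD; first by apply: cvg_sumr => a; apply: cvgM; [exact: jprob_lim|exact: cvg_cst].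
  apply: cvgM; first exact: cvg_cst.
  apply: cvg_sumr => u; apply: cvgM; last exact: cvg_cst.
  by apply: cvg_sumr => a; apply: cvgM; [exact: jprob_lim|exact: cvg_cst].
pose g m := \sum_s `|adv pibar (pis m) s|.
have g_lim : g @ \oo --> 0.
  have : g @ \oo --> \sum_(s : S) `|0 : R|.
    by apply: cvg_sumr => s; apply: cvg_norm; exact: adv_lim.
  by rewrite big1 // => s _; rewrite normr0.
apply/subr_cvg0.
apply: (@squeeze_cvgr _ _ _ _ (fun m => - (g m / (1 - gamma))) (fun m => g m / (1 - gamma))).
- near=> m; rewrite -ler_norml; apply: performance_difference_le => // s.
  by rewrite /g (bigD1 s) //= lerDl sumr_ge0.
- by rewrite -oppr0 -(mul0r (1 - gamma)^-1); apply: cvgN; apply: cvgMl.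
- by rewrite -(mul0r (1 - gamma)^-1); apply: cvgMl.
Unshelve. all: by end_near. Qed.

Lemma normr_Af_le pi s a : `|Af r P gamma pi s a| <= epsA r P gamma pi.
Proof. exact: le_trans (le_bigmax _ _ a) (le_bigmax _ _ s). Qed.

Lemma epsA_ge0 pi : 0 <= epsA r P gamma pi.
Proof. exact: bigmax_ge_id. Qed.

Section Deviation.
Variables (pi pi' : jpol) (i : 'I_n).
Arguments pi : clear implicits.
Arguments pi' : clear implicits.
Hypotheses (hpi : is_jpol pi) (hpi' : is_jpol pi') (others : forall l, l != i -> pi' l = pi l).

Definition delta s := \sum_(ai : A i) `|pi' i s ai - pi i s ai|.
Definition delta_max := \big[Num.max/0]_s delta s.

Lemma jprob_deviate s a : jprob pi' s a = pi' i s (a i) * \prod_(l < n | l != i) pi l s (a l).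
Proof.
rewrite (jprob_split pi' s a i); congr (_ * _).
by apply: eq_bigr => l li; rewrite others.
Qed.

Lemma l1_jprob_deviate s : \sum_a `|jprob pi' s a - jprob pi s a| = delta s.
Proof.
transitivity (\sum_(a : jact A) `|pi' i s (a i) - pi i s (a i)| * \prod_(l < n | l != i) pi l s (a l) * 1).
  apply: eq_bigr => a _; rewrite jprob_deviate (jprob_split pi s a i) -mulrBl normrM mulr1.
  by rewrite (ger0_norm (prodr_ge0 _ _)) // => l _; exact: (hpi l s).1.
rewrite (sum_partition_at pi s (fun ai => `|pi' i s ai - pi i s ai|) (fun=> 1)).
apply: eq_bigr => ai _.
by under eq_bigr do rewrite mulr1; rewrite sum_jprob_others // mulr1.
Qed.

Lemma adv_Ai s : adv pi pi' s = \sum_(ai : A i) pi' i s ai * Ai r P gamma pi s ai.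
Proof.
rewrite /Ai; under eq_bigr do rewrite mulrBr.
rewrite sumrB -mulr_suml (hpi' i s).2 mul1r /adv -sum_jprob_Qf //.
rewrite /Qi -(sum_partition_at pi s (pi' i s) (Qf r P gamma pi s)); congr (_ - _).
by apply: eq_bigr => a _; rewrite jprob_deviate.
Qed.

Lemma normr_adv_le s : `|adv pi pi' s| <= epsA r P gamma pi * delta s.
Proof.
have -> : adv pi pi' s = \sum_a (jprob pi' s a - jprob pi s a) * Af r P gamma pi s a.
  under eq_bigr do rewrite mulrBl.
  rewrite sumrB sum_jprob_Af // subr0 /Af; under eq_bigr do rewrite mulrBr.
  by rewrite sumrB -mulr_suml jprob_sum1 // mul1r /adv sum_jprob_Qf.
rewrite -l1_jprob_deviate mulr_sumr; apply: le_trans (ler_norm_sum _ _ _) _.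
by apply: ler_sum => a _; rewrite normrM mulrC ler_wpM2r ?normr_Af_le.
Qed.

Lemma l1_Ppi_deviate s : \sum_u `|Ppi P pi' s u - Ppi P pi s u| <= delta s.
Proof.
rewrite -l1_jprob_deviate.
apply: (@le_trans _ _ (\sum_u \sum_a `|jprob pi' s a - jprob pi s a| * P s a u)).
  apply: ler_sum => u _; rewrite /Ppi -sumrB; apply: le_trans (ler_norm_sum _ _ _) _.
  by apply: ler_sum => a _; rewrite -mulrBl normrM (ger0_norm ((hP s a).1 u)).
rewrite exchange_big /=; apply: ler_sum => a _.
by rewrite -mulr_sumr (hP s a).2 mulr1.
Qed.

Lemma delta_ge0 s : 0 <= delta s.
Proof. exact: sumr_ge0. Qed.

Lemma delta_max_ge0 : 0 <= delta_max.
Proof. exact: bigmax_ge_id. Qed.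

Lemma delta_le_max s : delta s <= delta_max.
Proof. exact: le_bigmax. Qed.

Variable d : S -> R.
Hypothesis hd : is_dist d.

Lemma l1_sdist_deviate t :
  l1 (fun u => sdist P pi' d t u - sdist P pi d t u) <= t%:R * delta_max.
Proof.
elim: t => [|t IH].
  by rewrite /l1 /=; under eq_bigr do rewrite subrr normr0; rewrite big1 // mul0r.
set x := sdist P pi' d t; set y := sdist P pi d t; rewrite /l1 /=.
apply: (@le_trans _ _ (\sum_u (\sum_s `|x s - y s| * Ppi P pi' s u
    + \sum_s y s * `|Ppi P pi' s u - Ppi P pi s u|))).
  apply: ler_sum => u _.
  have -> : \sum_s x s * Ppi P pi' s u - \sum_s y s * Ppi P pi s u =
      \sum_s ((x s - y s) * Ppi P pi' s u + y s * (Ppi P pi' s u - Ppi P pi s u)).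
    by rewrite -sumrB; apply: eq_bigr => s _; ring.
  apply: le_trans (ler_norm_sum _ _ _) _; rewrite -big_split; apply: ler_sum => s _.
  apply: le_trans (ler_normD _ _) _; rewrite !normrM (ger0_norm (Ppi_ge0 _ _ hpi')).
  by rewrite (ger0_norm (sdist_ge0 _ _ hpi hd.1)).
rewrite big_split /= exchange_big [X in _ + X]exchange_big /=.
have -> : \sum_s \sum_u `|x s - y s| * Ppi P pi' s u = l1 (fun u => x u - y u).
  by apply: eq_bigr => s _; rewrite -mulr_sumr Ppi_sum1 // mulr1.
rewrite -natr1 mulrDl mul1r lerD //.
apply: (@le_trans _ _ (\sum_s y s * delta_max)).
  apply: ler_sum => s _; rewrite -mulr_sumr ler_wpM2l ?(sdist_ge0 _ _ hpi hd.1) //.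
  exact: le_trans (l1_Ppi_deviate s) (delta_le_max s).
by rewrite -mulr_suml /y sdist_sum // hd.2 mul1r.
Qed.

Lemma cvg_rho s : (fun N => \sum_(t < N) gamma ^+ t * sdist P pi d t s) @ \oo --> rho P gamma d pi s.
Proof.
apply: (geometric_dominated_cvgn hg0 hg1
  (u := fun t => gamma ^+ t * sdist P pi d t s) (c := l1 d)) => t.
rewrite normrM ger0_norm ?exprn_ge0 // mulrC ler_wpM2r ?exprn_ge0 //.
exact: le_trans (normr_le_l1 _ s) (l1_sdist_le d t hpi).
Qed.

Lemma cvg_Lsur : disc_sum pi d (adv pi pi') @ \oo --> Lsur r P gamma d pi (pi' i).
Proof.
have -> : disc_sum pi d (adv pi pi') =
    fun N => \sum_s (\sum_(t < N) gamma ^+ t * sdist P pi d t s) * adv pi pi' s.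
  apply/funext => N; rewrite /disc_sum /dot; under eq_bigr do rewrite mulr_sumr.
  rewrite exchange_big /=; apply: eq_bigr => s _; rewrite mulr_suml.
  by apply: eq_bigr => t _; rewrite mulrA.
apply: cvg_sumr => s; rewrite -adv_Ai.
by apply: cvgM; [exact: cvg_rho|exact: cvg_cst].
Qed.

Lemma Jf_Lsur_gap :
  `|(Jf d pi' - Jf d pi) - Lsur r P gamma d pi (pi' i)| <=
  epsA r P gamma pi * delta_max ^+ 2 * (gamma / (1 - gamma) ^+ 2).
Proof.
have gap_lim : (fun N => disc_sum pi' d (adv pi pi') N - disc_sum pi d (adv pi pi') N)
    @ \oo --> (Jf d pi' - Jf d pi) - Lsur r P gamma d pi (pi' i).
  by apply: cvgB; [exact: performance_difference|exact: cvg_Lsur].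
apply: (norm_cvg_le gap_lim) => N; rewrite /disc_sum -sumrB.
apply: le_trans (ler_norm_sum _ _ _) _.
apply: (@le_trans _ _ (\sum_(t < N) t%:R * gamma ^+ t * (epsA r P gamma pi * delta_max ^+ 2))).
  apply: ler_sum => t _; rewrite -mulrBr normrM ger0_norm ?exprn_ge0 //.
  have -> : dot (sdist P pi' d t) (adv pi pi') - dot (sdist P pi d t) (adv pi pi') =
      dot (fun u => sdist P pi' d t u - sdist P pi d t u) (adv pi pi').
    by rewrite /dot -sumrB; apply: eq_bigr => s _; rewrite mulrBl.
  have adv_le s : `|adv pi pi' s| <= epsA r P gamma pi * delta_max.
    by apply: le_trans (normr_adv_le s) _; rewrite ler_wpM2l ?epsA_ge0 ?delta_le_max.
  apply: le_trans (ler_wpM2l (exprn_ge0 _ hg0) (normr_dot_le _ adv_le)) _.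
  apply: (@le_trans _ _ (gamma ^+ t * (t%:R * delta_max * (epsA r P gamma pi * delta_max)))).
    rewrite ler_wpM2l ?exprn_ge0 // ler_wpM2r ?mulr_ge0 ?epsA_ge0 ?delta_max_ge0 //.
    exact: l1_sdist_deviate.
  by rewrite le_eqVlt; apply/orP; left; apply/eqP; ring.
rewrite -mulr_suml mulrC ler_wpM2l ?arith_geometric_sum_le //.
by rewrite mulr_ge0 ?epsA_ge0 ?exprn_ge0 ?delta_max_ge0.
Qed.

Lemma delta_max_sqr_le_DmaxKL : ((delta_max ^+ 2 / 4)%:E <= DmaxKL (pi i) (pi' i))%E.
Proof.
have [s0 _] : exists s0 : S, true.
  case: (pickP (@predT S)) => [s0 _|S0]; first by exists s0.
  by move: hd.2; rewrite big_pred0 // => /esym/eqP; rewrite oner_eq0.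
have [s1 _ dmE] := eq_bigmax s0 predT delta isT (fun s _ => delta_ge0 s).
rewrite /delta_max dmE.
apply: le_trans (le_bigmax _ (fun s => KL (pi i s) (pi' i s)) s1).
have := l1_sqr_div4_le_KL (hpi i s1).1 (hpi i s1).2 (hpi' i s1).1 (hpi' i s1).2.
by rewrite /delta; under eq_bigr do rewrite distrC.
Qed.

End Deviation.

Lemma Lsur_self pi (i : 'I_n) d : is_jpol pi -> Lsur r P gamma d pi (pi i) = 0.
Proof.
move=> hpi; rewrite /Lsur big1 // => s _.
by rewrite -(adv_Ai hpi hpi (fun l _ => erefl)) /adv -bellman // subrr mulr0.
Qed.

Lemma DmaxKL_self (T : finType) (p : S -> T -> R) : (DmaxKL p p <= 0)%E.
Proof.
rewrite /DmaxKL; elim/big_ind: _ => [|x y x0 y0|s _]; first exact: leNye.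
  by rewrite ge_max x0 y0.
exact: KL_self_le0.
Qed.

(* Here the constant 4 of C = 4 gamma eps / (1 - gamma)^2 meets the 4 of the
   Pinsker-type bound delta^2 / 4 <= D_KL^max. *)
Lemma Jf_le_of_Fobj pi pi' (i : 'I_n) d : is_jpol pi -> is_jpol pi' ->
  (forall l, l != i -> pi' l = pi l) -> is_dist d ->
  (Fobj r P gamma d pi (pi i) (pi i) <= Fobj r P gamma d pi (pi i) (pi' i))%E ->
  Jf d pi <= Jf d pi'.
Proof.
move=> hpi hpi' others hd hF.
set C := Cpen r P gamma pi; set L := Lsur r P gamma d pi (pi' i).
set dm := delta_max pi pi' i.
have C0 : 0 <= C.
  rewrite /C /Cpen; apply: divr_ge0; last by rewrite exprn_ge0 // subr_ge0 ltW.
  by rewrite !mulr_ge0 ?epsA_ge0.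
have F0 : (0 <= Fobj r P gamma d pi (pi i) (pi i))%E.
  rewrite /Fobj Lsur_self // sub0e oppe_ge0; apply: mule_ge0_le0; first by rewrite lee_fin.
  exact: DmaxKL_self.
have LC_ge0 : 0 <= L - C * (dm ^+ 2 / 4).
  rewrite -lee_fin; apply: le_trans (le_trans F0 hF) _.
  rewrite EFinB; apply: leeB => //; rewrite EFinM; apply: lee_wpmul2l; first by rewrite lee_fin.
  exact: (delta_max_sqr_le_DmaxKL i hpi hpi' hd).
have CdE : C * (dm ^+ 2 / 4) = epsA r P gamma pi * dm ^+ 2 * (gamma / (1 - gamma) ^+ 2).
  by rewrite /C /Cpen; field; rewrite subr_eq0 gt_eqF.
move: (Jf_Lsur_gap hpi hpi' others hd); rewrite -/L -/dm -CdE ler_norml => /andP[gap _].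
lra.
Qed.

Section InterleavedScheme.
Variables (d : S -> R) (K : 'I_n -> nat) (pik : nat -> jpol)
  (mic : nat -> forall i : 'I_n, nat -> pol R S A i).
Arguments pik : clear implicits.
Arguments mic : clear implicits.
Hypotheses (hd : is_dist d) (h0 : is_jpol (pik 0%N))
  (hmic0 : forall k i, mic k i 0%N = pik k i)
  (hnext : forall k i, pik k.+1 i = mic k i (K i))
  (hstep : forall k (i : 'I_n) j, (j < K i)%N ->
     is_pol (mic k i j.+1) /\
     forall hat : pol R S A i, is_pol hat ->
       (Fobj r P gamma d (baseline (pik k) (pik k.+1) i (fun l => mic k l j)) (mic k i j) hat
        <= Fobj r P gamma d (baseline (pik k) (pik k.+1) i (fun l => mic k l j)) (mic k i j)
             (mic k i j.+1))%E).

Local Notation Pi k i j := (baseline (pik k) (pik k.+1) i (fun l => mic k l j)).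

Lemma micro_is_pol k : is_jpol (pik k) -> forall i j, (j <= K i)%N -> is_pol (mic k i j).
Proof.
move=> pik_pol i; elim=> [_|j IH jK]; first by rewrite hmic0.
exact: (hstep k jK).1.
Qed.

Lemma rounds_is_jpol k : is_jpol (pik k).
Proof. by elim: k => // k IH i; rewrite hnext; exact: micro_is_pol. Qed.

Lemma baseline_is_jpol k i j : (j <= K i)%N -> is_jpol (Pi k i j).
Proof.
move=> jK l; rewrite /baseline; case: ltngtP => [_|_|/val_inj eli]; try exact: rounds_is_jpol.
by subst l; exact: micro_is_pol (rounds_is_jpol k) _ _ jK.
Qed.

Lemma Jf_micro_le k i j : (j < K i)%N -> Jf d (Pi k i j) <= Jf d (Pi k i j.+1).
Proof.
move=> jK; apply: (Jf_le_of_Fobj (i := i)) => //.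
- exact: baseline_is_jpol (ltnW jK).
- exact: baseline_is_jpol.
- by move=> l li; exact: baseline_off.
rewrite !baseline_at /=; apply: (hstep k jK).2.
exact: micro_is_pol (rounds_is_jpol k) _ _ (ltnW jK).
Qed.

Lemma Jf_micro_chain k i j : (j <= K i)%N -> Jf d (Pi k i 0) <= Jf d (Pi k i j).
Proof. by elim: j => [//|j IH jK]; exact: le_trans (IH (ltnW jK)) (Jf_micro_le k jK). Qed.

Lemma Jf_splice_le k m : (m <= n)%N ->
  Jf d (splice (pik k) (pik k.+1) 0) <= Jf d (splice (pik k) (pik k.+1) m).
Proof.
elim: m => [//|m IH mn]; apply: le_trans (IH (ltnW mn)) _.
pose i := Ordinal mn; rewrite -[m]/(val i).
rewrite (splice_baseline_first (pik k.+1) (c := fun l => mic k l 0)) ?hmic0 //.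
rewrite (splice_baseline_last (pik k) (c := fun l => mic k l (K i))) -?hnext //.
exact: Jf_micro_chain.
Qed.

Lemma Jf_round_le k : Jf d (pik k) <= Jf d (pik k.+1).
Proof.
have := Jf_splice_le k (leqnn n).
have -> : splice (pik k) (pik k.+1) 0 = pik k by apply: jpol_ext => l s x; rewrite /splice ltn0.
have -> // : splice (pik k) (pik k.+1) n = pik k.+1.
by apply: jpol_ext => l s x; rewrite /splice ltn_ord.
Qed.

End InterleavedScheme.

End MDP.

Unset Implicit Arguments.

Theorem corollary1 (R : realType) (S : finType) (n : nat) (A : 'I_n -> finType)
  (r : S -> jact A -> R) (Rmax : R) (P : S -> jact A -> S -> R) (d : S -> R) (gamma : R)
  (hr : forall s a, `|r s a| <= Rmax)
  (hP : forall s a, is_dist (P s a)) (hd : is_dist d)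
  (hg0 : 0 <= gamma) (hg1 : gamma < 1)
  (K : 'I_n -> nat) (hK : forall i, (0 < K i)%N)
  (pik : nat -> jpol R S A) (mic : nat -> forall i : 'I_n, nat -> pol R S A i)
  (h0 : is_jpol (pik 0%N))
  (hmic0 : forall k i, mic k i 0%N = pik k i)
  (hnext : forall k i, pik k.+1 i = mic k i (K i))
  (hstep : forall k (i : 'I_n) j, (j < K i)%N ->
     is_pol (mic k i j.+1) /\
     forall hat : pol R S A i, is_pol hat ->
       (Fobj r P gamma d (baseline (pik k) (pik k.+1) i (fun l => mic k l j)) (mic k i j) hat
        <= Fobj r P gamma d (baseline (pik k) (pik k.+1) i (fun l => mic k l j)) (mic k i j)
             (mic k i j.+1))%E) :
  exists Jbar : R,
    (fun k => Jf r P gamma d (pik k)) @ \oo --> Jbar /\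
    (exists (phi : nat -> nat) (pibar : jpol R S A),
        (forall m, (phi m < phi m.+1)%N) /\
        (forall i s a, (fun m => pik (phi m) i s a) @ \oo --> pibar i s a)) /\
    (forall (phi : nat -> nat) (pibar : jpol R S A),
        (forall m, (phi m < phi m.+1)%N) ->
        (forall i s a, (fun m => pik (phi m) i s a) @ \oo --> pibar i s a) ->
        Jf r P gamma d pibar = Jbar).
Proof.
have pik_pol := rounds_is_jpol h0 hmic0 hnext hstep.
set u := fun k => Jf r P gamma d (pik k).
have u_lim : u @ \oo --> sup (range u).
  apply: nondecreasing_cvgn.
    by apply/nondecreasing_seqP => k; exact: (Jf_round_le hP hg0 hg1 hd h0 hmic0 hnext hstep).
  by exists (`|Rmax| / (1 - gamma)) => _ [k _ <-]; exact: (Jf_le_bound hr hP hg0 hg1).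
exists (sup (range u)); split=> //; split.
  have [phi /increasing_seqP phiS [pibar pibar_lim]] := jpol_cluster pik_pol.
  by exists phi, pibar.
move=> phi pibar phiS pibar_lim; have phi_incr : increasing_seq phi by apply/increasing_seqP.
have pibar_pol := is_jpol_lim (fun m => pik_pol (phi m)) pibar_lim.
exact: cvg_unique (cvg_Jf hP hg0 hg1 pibar_pol (fun m => pik_pol (phi m)) hd pibar_lim)
  (cvg_increasing_subseq phi_incr u_lim).
Qed.
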